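(* For every integer $q>1$ and every integer $n$, $$\left\lceil\frac{n}{q}\right\rceil=\sum_{i=0}^{q-1}\left\lceil\frac{n-i-\sum_{j=1}^{q-1}\left\lceil\frac{n-j}{q}\right\rceil}{q}\right\rceil,$$ i.e. $\lceil n/q\rceil$ formally satisfies the recursion $R(n)=\sum_{i=0}^{q-1}R\big(n-i-\sum_{j=1}^{q-1}R(n-j)\big)$. *)

From Stdlib Require Import ZArith List.
Open Scope Z_scope.

(* Ceiling of the rational number n/q, for q > 0:
   ceil(n/q) = - floor((-n)/q), with Z.div the floor division for q > 0. *)
Definition ceil_div (n q : Z) : Z := - ((- n) / q).

(* Sum over an integer range: zsum a b f = f a + f (a+1) + ... + f b (0 if b < a). *)
Definition zsum (a b : Z) (f : Z -> Z) : Z :=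
  fold_right Z.add 0 (map (fun k => f (a + Z.of_nat k)) (seq 0 (Z.to_nat (b - a + 1)))).

(* Hermite's identity for ceilings: for q > 0 the q numbers ceil((m - j)/q),
   0 <= j < q, consist of q copies of floor(m/q) with one added to the first
   (m mod q) of them, so they sum to m.  Applied to m = n it shows that the
   inner sum equals n - ceil(n/q); every outer argument thus reduces to
   ceil(n/q) - i, and Hermite's identity for m = ceil(n/q) closes the proof. *)
From Stdlib Require Import ZArith List Lia.
Open Scope Z_scope.

Lemma fold_right_add_init (l : list Z) (x : Z) :
  fold_right Z.add x l = fold_right Z.add 0 l + x.
Proof. induction l as [|y l IH]; simpl; lia. Qed.

Lemma zsum_empty (a b : Z) (f : Z -> Z) : b < a -> zsum a b f = 0.
Proof. intros hab; unfold zsum; replace (Z.to_nat (b - a + 1)) with 0%nat by lia; reflexivity. Qed.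

Lemma zsum_snoc (a b : Z) (f : Z -> Z) :
  a <= b + 1 -> zsum a (b + 1) f = zsum a b f + f (b + 1).
Proof.
  intros hab; unfold zsum.
  replace (Z.to_nat (b + 1 - a + 1)) with (S (Z.to_nat (b - a + 1))) by lia.
  rewrite seq_S, map_app, fold_right_app; cbn [map fold_right].
  rewrite fold_right_add_init, Z.add_0_r.
  do 2 f_equal; lia.
Qed.

Lemma zsum_cons (a b : Z) (f : Z -> Z) :
  a <= b -> zsum a b f = f a + zsum (a + 1) b f.
Proof.
  intros hab; unfold zsum.
  replace (Z.to_nat (b - a + 1)) with (S (Z.to_nat (b - (a + 1) + 1))) by lia.
  cbn [seq map fold_right]; rewrite Z.add_0_r; f_equal.
  rewrite <- seq_shift, map_map; f_equal.
  apply map_ext; intros k; f_equal; lia.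
Qed.

Lemma zsum_ext (a b : Z) (f g : Z -> Z) :
  (forall k, f k = g k) -> zsum a b f = zsum a b g.
Proof. intros hfg; unfold zsum; f_equal; apply map_ext; auto. Qed.

Lemma ceil_div_sub (q m k : Z) :
  0 <= k < q ->
  ceil_div (m - k) q = m / q + (if k <? m mod q then 1 else 0).
Proof.
  intros hk; unfold ceil_div.
  pose proof (Z.div_mod m q ltac:(lia)) as hm.
  pose proof (Z.mod_pos_bound m q ltac:(lia)) as hr.
  set (a := m / q) in *; set (r := m mod q) in *.
  replace (- (m - k)) with ((k - r) + (- a) * q) by lia.
  rewrite Z_div_plus_full by lia.
  destruct (Z.ltb_spec k r) as [hkr | hrk].
  - replace (k - r) with ((k - r + q) + (-1) * q) by lia.
    rewrite Z_div_plus_full, Z.div_small by lia; lia.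
  - rewrite Z.div_small by lia; lia.
Qed.

Lemma zsum_ceil_div_sub (q m K : Z) :
  0 < q -> 0 <= K <= q ->
  zsum 0 (K - 1) (fun j => ceil_div (m - j) q) = K * (m / q) + Z.min K (m mod q).
Proof.
  intros hq [hK0 hKq]; pose proof (Z.mod_pos_bound m q hq) as hr.
  revert hKq; pattern K; apply natlike_ind; try assumption.
  - intros _; rewrite zsum_empty by lia; lia.
  - intros k hk IH hkq.
    replace (Z.succ k - 1) with (k - 1 + 1) by lia.
    rewrite zsum_snoc, IH, ceil_div_sub by lia.
    destruct (Z.ltb_spec (k - 1 + 1) (m mod q)); lia.
Qed.

Lemma hermite_ceil_div (q m : Z) :
  0 < q -> zsum 0 (q - 1) (fun j => ceil_div (m - j) q) = m.
Proof.
  intros hq; rewrite zsum_ceil_div_sub by lia.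
  pose proof (Z.div_mod m q ltac:(lia)).
  pose proof (Z.mod_pos_bound m q hq); lia.
Qed.

Theorem theorem6 (q n : Z) (hq : 1 < q) :
  ceil_div n q =
  zsum 0 (q - 1)
    (fun i => ceil_div (n - i - zsum 1 (q - 1) (fun j => ceil_div (n - j) q)) q).
Proof.
  assert (inner : zsum 1 (q - 1) (fun j => ceil_div (n - j) q) = n - ceil_div n q).
  { pose proof (hermite_ceil_div q n ltac:(lia)) as hn.
    rewrite zsum_cons in hn by lia; cbn beta in hn.
    rewrite Z.sub_0_r, Z.add_0_l in hn; lia. }
  rewrite inner; rewrite <- (hermite_ceil_div q (ceil_div n q)) at 1 by lia.
  apply zsum_ext; intros i; f_equal; lia.
Qed.
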